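(* There is a universal constant $C$ such that the following holds. Let $u$ be a continuous function on $[0,1]\times[-1,1]^3$ which is $C^1$ in $t$ and $C^2$ in $x$ on $(0,1]\times(-1,1)^3$, and suppose that pointwise on $(0,1]\times(-1,1)^3$ $$(\partial_t-\Delta)u=-u^3+g(u,z),$$ where $g$ is a bounded function with $\|g\|:=\sup|g|$. Then for all $(t,x)\in(0,1]\times(-1,1)^3$, $x=(x_1,x_2,x_3)$, $$|u(t,x)|\le C\max\Big\{\frac{1}{\min\{\sqrt t,\,1-x_i,\,1+x_i,\ i=1,2,3\}},\ \|g\|^{1/3}\Big\}.$$ *)

From Stdlib Require Import Reals Lra.
Open Scope R_scope.

Definition F4 := R -> R -> R -> R -> R.

Definition in_closed (t x1 x2 x3 : R) : Prop :=
  0 <= t <= 1 /\ -1 <= x1 <= 1 /\ -1 <= x2 <= 1 /\ -1 <= x3 <= 1.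

Definition in_open (t x1 x2 x3 : R) : Prop :=
  0 < t <= 1 /\ -1 < x1 < 1 /\ -1 < x2 < 1 /\ -1 < x3 < 1.

Definition cont_on (S : R -> R -> R -> R -> Prop) (f : F4) : Prop :=
  forall t x1 x2 x3, S t x1 x2 x3 ->
  forall eps, 0 < eps -> exists delta, 0 < delta /\
    forall s y1 y2 y3, S s y1 y2 y3 ->
      Rabs (s - t) < delta -> Rabs (y1 - x1) < delta ->
      Rabs (y2 - x2) < delta -> Rabs (y3 - x3) < delta ->
      Rabs (f s y1 y2 y3 - f t x1 x2 x3) < eps.

Definition sect (f : F4) (i : nat) (t x1 x2 x3 : R) : R -> R :=
  match i with
  | O => fun s => f t s x2 x3
  | S O => fun s => f t x1 s x3
  | _ => fun s => f t x1 x2 s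
  end.

Definition coord (i : nat) (x1 x2 x3 : R) : R :=
  match i with
  | O => x1
  | S O => x2
  | _ => x3
  end.

(* ut is the t-derivative of u, D1 i the x_i-derivative, D2 i j the
   x_j-derivative of D1 i, on (0,1] x (-1,1)^3; all of them continuous there:
   i.e. u is C^1 in t and C^2 in x on (0,1] x (-1,1)^3. *)
Definition C1t_C2x (u ut : F4) (D1 : nat -> F4) (D2 : nat -> nat -> F4) : Prop :=
  (forall t x1 x2 x3, in_open t x1 x2 x3 ->
     derivable_pt_lim (fun s => u s x1 x2 x3) t (ut t x1 x2 x3)) /\
  (forall i t x1 x2 x3, (i < 3)%nat -> in_open t x1 x2 x3 ->
     derivable_pt_lim (sect u i t x1 x2 x3) (coord i x1 x2 x3) (D1 i t x1 x2 x3)) /\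
  (forall i j t x1 x2 x3, (i < 3)%nat -> (j < 3)%nat -> in_open t x1 x2 x3 ->
     derivable_pt_lim (sect (D1 i) j t x1 x2 x3) (coord j x1 x2 x3)
                      (D2 i j t x1 x2 x3)) /\
  cont_on in_open ut /\
  (forall i, (i < 3)%nat -> cont_on in_open (D1 i)) /\
  (forall i j, (i < 3)%nat -> (j < 3)%nat -> cont_on in_open (D2 i j)).

(* Real cube root of a nonnegative number (0 at 0). *)
Definition cbrt (y : R) : R :=
  match Rle_dec y 0 with
  | left _ => 0
  | right _ => Rpower y (/ 3)
  end.

From Stdlib Require Import Reals Lra Psatz Lia.
From Coquelicot Require Import Coquelicot.
From mathcomp Require all_boot all_order all_algebra all_classical all_reals.
From mathcomp Require topology normedtype derive Rstruct Rstruct_topology.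
Open Scope R_scope.

(* Comparison with an explicit barrier on backward parabolic cylinders.  For
   r at most the parabolic distance of (t0, a) to the boundary, put
   w = K + phi (t - t0 + r^2) + sum_i psi_r (x_i - a_i) with K = |g|^(1/3),
   phi s = s^(-1/2) and psi_r y = 4r / (r^2 - y^2).  Since phi' >= -phi^3 and
   psi_r'' <= psi_r^3, superadditivity of cubes gives
   (d_t - Delta) w >= -w^3 + K^3 >= -w^3 + |g|.  The barrier blows up on the
   bottom and lateral faces of the cylinder, so if u exceeded w at the top
   centre, u - w would have a positive maximum at a point where
   (d_t - Delta)(u - w) >= 0, i.e. -u^3 >= -w^3: impossible.  Hence
   u(t0, a) <= K + 13/r, and the same for -u. *)

Lemma derivative_nonneg_at_left_max (f : R -> R) (a x l : R) :
  derivable_pt_lim f x l -> a < x ->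
  (forall y, a < y < x -> f y <= f x) -> 0 <= l.
Proof.
  intros Hd Hax Hmax.
  destruct (Rle_or_lt 0 l) as [Hl | Hl]; [exact Hl | exfalso].
  destruct (Hd (- l / 2)) as [d Hquot]; [lra |].
  pose proof (cond_pos d) as Hd0.
  set (k := - Rmin d (x - a) / 2).
  assert (Hk : a - x < k < 0 /\ - d < k).
  { pose proof (Rmin_l d (x - a)); pose proof (Rmin_r d (x - a)).
    pose proof (Rmin_pos d (x - a) Hd0 ltac:(lra)); unfold k; lra. }
  specialize (Hquot k ltac:(lra) ltac:(rewrite Rabs_left; lra)).
  specialize (Hmax (x + k) ltac:(lra)).
  assert (Hslope : 0 <= (f (x + k) - f x) / k).
  { replace ((f (x + k) - f x) / k) with ((f x - f (x + k)) / - k) by (field; lra).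
    apply Rdiv_le_0_compat; lra. }
  apply Rabs_def2 in Hquot; lra.
Qed.

Lemma derivative_zero_at_max (f : R -> R) (a b x l : R) :
  derivable_pt_lim f x l -> a < x < b ->
  (forall y, a < y < b -> f y <= f x) -> l = 0.
Proof.
  intros Hd Hx Hmax.
  assert (pr : derivable_pt f x) by (exists l; exact Hd).
  rewrite <- (derive_pt_eq_0 f x l pr Hd).
  apply (deriv_maximum f a b); try lra.
  intros y Hay Hyb; apply Hmax; lra.
Qed.

(* If [f'' x > 0], then [f' > 0] just right of the critical point [x] and the
   mean value theorem makes [f] increase there. *)
Lemma second_derivative_nonpos_at_max (f f' : R -> R) (a b x l : R) :
  a < x < b ->
  (forall y, a < y < b -> derivable_pt_lim f y (f' y)) ->
  derivable_pt_lim f' x l ->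
  (forall y, a < y < b -> f y <= f x) -> l <= 0.
Proof.
  intros Hx Hd Hd' Hmax.
  assert (Hcrit : f' x = 0) by exact (derivative_zero_at_max f a b x _ (Hd x Hx) Hx Hmax).
  destruct (Rle_or_lt l 0) as [Hl | Hl]; [exact Hl | exfalso].
  destruct (Hd' (l / 2)) as [d Hquot]; [lra |].
  pose proof (cond_pos d) as Hd0.
  set (k := Rmin d (b - x) / 2).
  assert (Hk : 0 < k < b - x /\ k < d).
  { pose proof (Rmin_l d (b - x)); pose proof (Rmin_r d (b - x)).
    pose proof (Rmin_pos d (b - x) Hd0 ltac:(lra)); unfold k; lra. }
  destruct (MVT_cor2 f f' x (x + k)) as [c [Hmvt Hc]]; [lra | |].
  { intros c Hc; apply Hd; lra. }
  specialize (Hquot (c - x) ltac:(lra) ltac:(rewrite Rabs_right; lra)).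
  replace (x + (c - x)) with c in Hquot by ring.
  rewrite Hcrit in Hquot; apply Rabs_def2 in Hquot.
  assert (Hpos : 0 < f' c).
  { replace (f' c) with ((f' c - 0) / (c - x) * (c - x)) by (field; lra).
    apply Rmult_lt_0_compat; lra. }
  assert (f (x + k) <= f x) by (apply Hmax; lra).
  assert (0 < f' c * (x + k - x)) by (apply Rmult_lt_0_compat; lra).
  lra.
Qed.

Lemma derivative_le_at_left_max_of_sub (f g : R -> R) (a x f' g' : R) :
  derivable_pt_lim f x f' -> derivable_pt_lim g x g' -> a < x ->
  (forall y, a < y < x -> f y - g y <= f x - g x) -> g' <= f'.
Proof.
  intros Hf Hg Hax Hmax.
  enough (0 <= f' - g') by lra.
  exact (derivative_nonneg_at_left_max (fun y => f y - g y) a x _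
           (derivable_pt_lim_minus f g x f' g' Hf Hg) Hax Hmax).
Qed.

Lemma second_derivative_le_at_max_of_sub (f f' g g' : R -> R) (a b x f'' g'' : R) :
  a < x < b ->
  (forall y, a < y < b -> derivable_pt_lim f y (f' y) /\ derivable_pt_lim g y (g' y)) ->
  derivable_pt_lim f' x f'' -> derivable_pt_lim g' x g'' ->
  (forall y, a < y < b -> f y - g y <= f x - g x) -> f'' <= g''.
Proof.
  intros Hx Hd Hf' Hg' Hmax.
  enough (f'' - g'' <= 0) by lra.
  apply (second_derivative_nonpos_at_max (fun y => f y - g y) (fun y => f' y - g' y) a b x);
    [exact Hx | | exact (derivable_pt_lim_minus f' g' x _ _ Hf' Hg') | exact Hmax].
  intros y Hy; destruct (Hd y Hy) as [Hfy Hgy].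
  exact (derivable_pt_lim_minus f g y _ _ Hfy Hgy).
Qed.

Definition phi (s : R) : R := / sqrt s.
Definition phi' (s : R) : R := - / (2 * s * sqrt s).
Definition psi (r y : R) : R := 4 * r / (r * r - y * y).
Definition psi' (r y : R) : R := 8 * r * y / ((r * r - y * y) * (r * r - y * y)).
Definition psi'' (r y : R) : R :=
  8 * r / ((r * r - y * y) * (r * r - y * y))
  + 32 * r * y * y / ((r * r - y * y) * (r * r - y * y) * (r * r - y * y)).

Lemma derivable_pt_lim_phi_shift (c t : R) :
  0 < t + c -> derivable_pt_lim (fun s => phi (s + c)) t (phi' (t + c)).
Proof.
  intros Hs; apply is_derive_Reals; unfold phi, phi'.
  assert (0 < sqrt (t + c)) by (apply sqrt_lt_R0; lra).
  auto_derive.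
  - repeat split; lra.
  - rewrite sqrt_sqrt by lra; field; lra.
Qed.

Lemma derivable_pt_lim_psi_shift (r a y : R) :
  0 < r -> - r < y - a < r ->
  derivable_pt_lim (fun z => psi r (z - a)) y (psi' r (y - a)).
Proof.
  intros Hr Hy; apply is_derive_Reals; unfold psi, psi'.
  assert (0 < r * r - (y - a) * (y - a)) by nra.
  auto_derive; [lra | field; lra].
Qed.

Lemma derivable_pt_lim_psi'_shift (r a y : R) :
  0 < r -> - r < y - a < r ->
  derivable_pt_lim (fun z => psi' r (z - a)) y (psi'' r (y - a)).
Proof.
  intros Hr Hy; apply is_derive_Reals; unfold psi', psi''.
  assert (0 < r * r - (y - a) * (y - a)) by nra.
  auto_derive; [nra | field; lra].
Qed.

Lemma phi_pos (s : R) : 0 < s -> 0 < phi s.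
Proof. intros; apply Rinv_0_lt_compat, sqrt_lt_R0; lra. Qed.

Lemma phi_square (r : R) : 0 < r -> phi (r * r) = / r.
Proof. intros; unfold phi; rewrite sqrt_square; lra. Qed.

Lemma phi_ge_inv (d s : R) : 0 < d -> 0 < s <= d * d -> / d <= phi s.
Proof.
  intros Hd Hs; unfold phi.
  assert (0 < sqrt s) by (apply sqrt_lt_R0; lra).
  apply Rinv_le_contravar; [lra |].
  rewrite <- (sqrt_square d) by lra; apply sqrt_le_1_alt; lra.
Qed.

Lemma phi'_ge (s : R) : 0 < s -> - phi s ^ 3 <= phi' s.
Proof.
  intros Hs; unfold phi, phi'.
  assert (0 < sqrt s) by (apply sqrt_lt_R0; lra).
  assert (E : (/ sqrt s) ^ 3 = / (s * sqrt s)).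
  { rewrite <- (sqrt_sqrt s) at 2 by lra; field; lra. }
  rewrite E.
  replace (- / (2 * s * sqrt s)) with (- / (s * sqrt s) + / (2 * s * sqrt s)) by (field; lra).
  assert (0 < / (2 * s * sqrt s)) by (apply Rinv_0_lt_compat; nra).
  lra.
Qed.

Lemma psi_pos (r y : R) : 0 < r -> - r < y < r -> 0 < psi r y.
Proof. intros; unfold psi; apply Rdiv_lt_0_compat; nra. Qed.

Lemma psi_0 (r : R) : 0 < r -> psi r 0 = 4 / r.
Proof. intros; unfold psi; field; lra. Qed.

Lemma psi_ge_inv (r d y : R) :
  0 < d <= r -> (r - d) * (r - d) <= y * y < r * r -> 2 / d <= psi r y.
Proof.
  intros Hd Hy; unfold psi.
  assert (Hq : 0 < r * r - y * y <= 2 * r * d) by nra.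
  replace (2 / d) with (4 * r / (2 * r * d)) by (field; lra).
  apply Rmult_le_compat_l; [lra |].
  apply Rinv_le_contravar; lra.
Qed.

Lemma phi_interior_or_ge (t0 r d t : R) :
  0 < d -> t0 - r * r + d * d <= t ->
  t0 - r * r + d * d < t \/ / d <= phi (t + (r * r - t0)).
Proof.
  intros Hd Ht; destruct (Rlt_or_le (t0 - r * r + d * d) t) as [Hlt | Hge]; [left; exact Hlt |].
  right; apply phi_ge_inv; nra.
Qed.

Lemma psi_interior_or_ge (a r d x : R) :
  0 < d <= r / 2 -> a - r + d <= x <= a + r - d ->
  a - r + d < x < a + r - d \/ / d <= psi r (x - a).
Proof.
  intros Hd Hx.
  assert (Hedge : forall y, y * y = (r - d) * (r - d) -> / d <= psi r y).
  { intros y Hy; apply Rle_trans with (2 / d).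
    - unfold Rdiv; pose proof (Rinv_0_lt_compat d ltac:(lra)); lra.
    - apply psi_ge_inv; [lra | nra]. }
  destruct (Rlt_or_le (a - r + d) x); [destruct (Rlt_or_le x (a + r - d)) |].
  - left; lra.
  - right; apply Hedge; replace (x - a) with (r - d) by lra; ring.
  - right; apply Hedge; replace (x - a) with (- (r - d)) by lra; ring.
Qed.

Lemma psi''_le (r y : R) : 0 < r -> - r < y < r -> psi'' r y <= psi r y ^ 3.
Proof.
  intros Hr Hy; unfold psi, psi''.
  set (q := r * r - y * y).
  assert (Hq : 0 < q) by (unfold q; nra).
  replace ((4 * r / q) ^ 3) with (64 * r * r * r / (q * q * q)) by (field; lra).
  replace (8 * r / (q * q) + 32 * r * y * y / (q * q * q))
    with ((8 * r * q + 32 * r * y * y) / (q * q * q)) by (field; lra).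
  apply Rmult_le_compat_r.
  - apply Rlt_le, Rinv_0_lt_compat; repeat apply Rmult_lt_0_compat; lra.
  - assert (0 <= r * q) by (apply Rmult_le_pos; lra).
    unfold q in *; nra.
Qed.

Lemma pow3_le_inv (a b : R) : 0 <= b -> a ^ 3 <= b ^ 3 -> a <= b.
Proof.
  intros Hb Hab; destruct (Rle_or_lt a b) as [Hle | Hgt]; [exact Hle | exfalso].
  assert (0 < (a - b) * (a * a + a * b + b * b)) by (apply Rmult_lt_0_compat; nra).
  nra.
Qed.

Lemma pow3_add_le (a b : R) : 0 <= a -> 0 <= b -> a ^ 3 + b ^ 3 <= (a + b) ^ 3.
Proof. intros; nra. Qed.

Lemma barrier_heat_inequality (K r s y1 y2 y3 : R) :
  0 <= K -> 0 < s -> 0 < r -> - r < y1 < r -> - r < y2 < r -> - r < y3 < r ->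
  K ^ 3 - (K + phi s + psi r y1 + psi r y2 + psi r y3) ^ 3
  <= phi' s - (psi'' r y1 + psi'' r y2 + psi'' r y3).
Proof.
  intros HK Hs Hr H1 H2 H3.
  pose proof (phi_pos s Hs); pose proof (phi'_ge s Hs).
  pose proof (psi_pos r y1 Hr H1); pose proof (psi''_le r y1 Hr H1).
  pose proof (psi_pos r y2 Hr H2); pose proof (psi''_le r y2 Hr H2).
  pose proof (psi_pos r y3 Hr H3); pose proof (psi''_le r y3 Hr H3).
  pose proof (pow3_add_le K (phi s) ltac:(lra) ltac:(lra)).
  pose proof (pow3_add_le (K + phi s) (psi r y1) ltac:(lra) ltac:(lra)).
  pose proof (pow3_add_le (K + phi s + psi r y1) (psi r y2) ltac:(lra) ltac:(lra)).
  pose proof (pow3_add_le (K + phi s + psi r y1 + psi r y2) (psi r y3) ltac:(lra) ltac:(lra)).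
  lra.
Qed.

Definition box (a0 b0 a1 b1 a2 b2 a3 b3 : R) (t x1 x2 x3 : R) : Prop :=
  a0 <= t <= b0 /\ a1 <= x1 <= b1 /\ a2 <= x2 <= b2 /\ a3 <= x3 <= b3.

Lemma cont_on_subset (S S' : R -> R -> R -> R -> Prop) (f : F4) :
  (forall t x1 x2 x3, S' t x1 x2 x3 -> S t x1 x2 x3) -> cont_on S f -> cont_on S' f.
Proof.
  intros Hsub Hf t x1 x2 x3 HS eps Heps.
  destruct (Hf t x1 x2 x3 (Hsub _ _ _ _ HS) eps Heps) as [d [Hd Hclose]].
  exists d; split; [exact Hd |]; intros; apply Hclose; auto.
Qed.

Definition oppF (f : F4) : F4 := fun t x1 x2 x3 => - f t x1 x2 x3.

Lemma cont_on_opp (S : R -> R -> R -> R -> Prop) (f : F4) :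
  cont_on S f -> cont_on S (oppF f).
Proof.
  intros Hf t x1 x2 x3 HS eps Heps.
  destruct (Hf t x1 x2 x3 HS eps Heps) as [d [Hd Hclose]].
  exists d; split; [exact Hd |]; intros s y1 y2 y3 HS' H0 H1 H2 H3.
  unfold oppF; rewrite <- Rabs_Ropp; replace (- (- f s y1 y2 y3 - - f t x1 x2 x3))
    with (f s y1 y2 y3 - f t x1 x2 x3) by ring; auto.
Qed.

Lemma cont_on_minus (S : R -> R -> R -> R -> Prop) (f g : F4) :
  cont_on S f -> cont_on S g -> cont_on S (fun t x1 x2 x3 => f t x1 x2 x3 - g t x1 x2 x3).
Proof.
  intros Hf Hg t x1 x2 x3 HS eps Heps.
  destruct (Hf t x1 x2 x3 HS (eps / 2) ltac:(lra)) as [d1 [Hd1 Hf']].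
  destruct (Hg t x1 x2 x3 HS (eps / 2) ltac:(lra)) as [d2 [Hd2 Hg']].
  exists (Rmin d1 d2); split; [apply Rmin_pos; lra |].
  intros s y1 y2 y3 HS' H0 H1 H2 H3.
  pose proof (Rmin_l d1 d2); pose proof (Rmin_r d1 d2).
  specialize (Hf' s y1 y2 y3 HS' ltac:(lra) ltac:(lra) ltac:(lra) ltac:(lra)).
  specialize (Hg' s y1 y2 y3 HS' ltac:(lra) ltac:(lra) ltac:(lra) ltac:(lra)).
  apply Rabs_def2 in Hf', Hg'; apply Rabs_def1; lra.
Qed.

Lemma continuity_pt_eps (g : R -> R) (x eps : R) :
  continuity_pt g x -> 0 < eps ->
  exists d, 0 < d /\ forall y, Rabs (y - x) < d -> Rabs (g y - g x) < eps.
Proof.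
  intros Hg Heps; destruct (Hg eps Heps) as [d [Hd Hclose]].
  exists d; split; [exact Hd |]; intros y Hy.
  destruct (Req_dec y x) as [-> | Hyx].
  - rewrite Rminus_diag, Rabs_R0; exact Heps.
  - apply Hclose; repeat split; auto.
Qed.

Lemma cont_on_separable (S : R -> R -> R -> R -> Prop) (g0 g1 g2 g3 : R -> R) :
  (forall t x1 x2 x3, S t x1 x2 x3 ->
     continuity_pt g0 t /\ continuity_pt g1 x1 /\
     continuity_pt g2 x2 /\ continuity_pt g3 x3) ->
  cont_on S (fun t x1 x2 x3 => g0 t + g1 x1 + g2 x2 + g3 x3).
Proof.
  intros Hg t x1 x2 x3 HS eps Heps.
  destruct (Hg t x1 x2 x3 HS) as [C0 [C1 [C2 C3]]].
  destruct (continuity_pt_eps g0 t (eps / 4) C0 ltac:(lra)) as [d0 [Hd0 E0]].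
  destruct (continuity_pt_eps g1 x1 (eps / 4) C1 ltac:(lra)) as [d1 [Hd1 E1]].
  destruct (continuity_pt_eps g2 x2 (eps / 4) C2 ltac:(lra)) as [d2 [Hd2 E2]].
  destruct (continuity_pt_eps g3 x3 (eps / 4) C3 ltac:(lra)) as [d3 [Hd3 E3]].
  exists (Rmin (Rmin d0 d1) (Rmin d2 d3)).
  split; [repeat apply Rmin_pos; lra |].
  intros s y1 y2 y3 _ H0 H1 H2 H3.
  pose proof (Rmin_l d0 d1); pose proof (Rmin_r d0 d1).
  pose proof (Rmin_l d2 d3); pose proof (Rmin_r d2 d3).
  pose proof (Rmin_l (Rmin d0 d1) (Rmin d2 d3)); pose proof (Rmin_r (Rmin d0 d1) (Rmin d2 d3)).
  specialize (E0 s ltac:(lra)); specialize (E1 y1 ltac:(lra)).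
  specialize (E2 y2 ltac:(lra)); specialize (E3 y3 ltac:(lra)).
  apply Rabs_def2 in E0, E1, E2, E3; apply Rabs_def1; lra.
Qed.

Module CompactBox.
Import all_boot all_order all_algebra all_classical all_reals topology normedtype derive.
Import Rstruct Rstruct_topology.
Import Order.TTheory GRing.Theory Num.Theory.
Local Open Scope classical_set_scope.
Local Open Scope ring_scope.

Lemma in_itvccE (a b x : R) : (x \in `[a, b]) <-> (Rle a x /\ Rle x b).
Proof.
rewrite in_itv /=; split; first by move=> /andP[/RleP h1 /RleP h2].
by move=> [/RleP h1 /RleP h2]; rewrite h1 h2.
Qed.

Lemma ball_Rabs {x y d : R} : ball x d y -> Rlt (Rabs (y - x)) d.
Proof. by rewrite /ball /= => /RltP; rewrite -normrN opprB. Qed.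

Lemma cont_on_box_attains_max (a0 b0 a1 b1 a2 b2 a3 b3 : R) (f : F4) :
  Rle a0 b0 -> Rle a1 b1 -> Rle a2 b2 -> Rle a3 b3 ->
  cont_on (box a0 b0 a1 b1 a2 b2 a3 b3) f ->
  exists t x1 x2 x3, box a0 b0 a1 b1 a2 b2 a3 b3 t x1 x2 x3 /\
    forall s y1 y2 y3, box a0 b0 a1 b1 a2 b2 a3 b3 s y1 y2 y3 ->
      Rle (f s y1 y2 y3) (f t x1 x2 x3).
Proof.
move=> h0 h1 h2 h3 cf.
pose A : set (R * R * R * R) :=
  `[a0, b0]%classic `*` `[a1, b1]%classic `*` `[a2, b2]%classic `*` `[a3, b3]%classic.
pose F (p : R * R * R * R) := f p.1.1.1 p.1.1.2 p.1.2 p.2.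
have AE p : A p <-> box a0 b0 a1 b1 a2 b2 a3 b3 p.1.1.1 p.1.1.2 p.1.2 p.2.
  case: p => [[[t x1] x2] x3]; rewrite /A /box /=; split.
    by move=> [[[/in_itvccE ? /in_itvccE ?] /in_itvccE ?] /in_itvccE ?].
  by move=> [/in_itvccE ? [/in_itvccE ? [/in_itvccE ? /in_itvccE ?]]].
have cA : compact A.
  by do 3 (apply: compact_setX; last exact: segment_compact); exact: segment_compact.
have nA : A !=set0 by exists (a0, a1, a2, a3); apply/AE; rewrite /box /=; lra.
have cF : {within A, continuous F}.
  apply/subspace_continuousP => x /[dup] Ax /AE Bx.
  apply/(@cvgrPdist_lt R R^o) => e /RltP e0.
  have [d [d0 hd]] := cf _ _ _ _ Bx e e0.
  apply/nbhs_ballP; exists d; first exact/RltP.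
  move=> y [[[q0 q1] q2] q3] /AE By.
  rewrite -normrN opprB; apply/RltP.
  exact: (hd _ _ _ _ By (ball_Rabs q0) (ball_Rabs q1) (ball_Rabs q2) (ball_Rabs q3)).
have [c /set_mem /AE Bc hc] := compact_EVT_max nA cA cF.
exists c.1.1.1, c.1.1.2, c.1.2, c.2; split => // s y1 y2 y3 Bs.
have As : A (s, y1, y2, y3) by apply/AE.
by have /RleP := hc _ (mem_set As).
Qed.
End CompactBox.

Definition diag_derivatives (u ut : F4) (D1 : nat -> F4) (D2 : nat -> nat -> F4) : Prop :=
  (forall t x1 x2 x3, in_open t x1 x2 x3 ->
     derivable_pt_lim (fun s => u s x1 x2 x3) t (ut t x1 x2 x3)) /\
  (forall i t x1 x2 x3, (i < 3)%nat -> in_open t x1 x2 x3 ->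
     derivable_pt_lim (sect u i t x1 x2 x3) (coord i x1 x2 x3) (D1 i t x1 x2 x3)) /\
  (forall i t x1 x2 x3, (i < 3)%nat -> in_open t x1 x2 x3 ->
     derivable_pt_lim (sect (D1 i) i t x1 x2 x3) (coord i x1 x2 x3) (D2 i i t x1 x2 x3)).

Lemma C1t_C2x_diag_derivatives (u ut : F4) (D1 : nat -> F4) (D2 : nat -> nat -> F4) :
  C1t_C2x u ut D1 D2 -> diag_derivatives u ut D1 D2.
Proof.
  intros [Hut [HD1 [HD2 _]]]; repeat split; auto.
Qed.

Lemma sect_oppF (f : F4) (i : nat) (t x1 x2 x3 : R) :
  sect (oppF f) i t x1 x2 x3 = fun s => - sect f i t x1 x2 x3 s.
Proof. destruct i as [| [|]]; reflexivity. Qed.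

Lemma diag_derivatives_oppF (u ut : F4) (D1 : nat -> F4) (D2 : nat -> nat -> F4) :
  diag_derivatives u ut D1 D2 ->
  diag_derivatives (oppF u) (oppF ut) (fun i => oppF (D1 i)) (fun i j => oppF (D2 i j)).
Proof.
  intros [Hut [HD1 HD2]]; repeat split; intros.
  - apply derivable_pt_lim_opp; auto.
  - rewrite sect_oppF; apply derivable_pt_lim_opp; auto.
  - rewrite sect_oppF; apply derivable_pt_lim_opp; auto.
Qed.

Definition cylinder (t0 a1 a2 a3 r : R) (t x1 x2 x3 : R) : Prop :=
  t0 - r * r < t <= t0 /\ - r < x1 - a1 < r /\ - r < x2 - a2 < r /\ - r < x3 - a3 < r.

Definition barrier (K t0 a1 a2 a3 r : R) : F4 := fun t x1 x2 x3 =>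
  K + phi (t + (r * r - t0)) + psi r (x1 - a1) + psi r (x2 - a2) + psi r (x3 - a3).

Lemma barrier_top_centre (K t0 a1 a2 a3 r : R) :
  0 < r -> barrier K t0 a1 a2 a3 r t0 a1 a2 a3 = K + 13 / r.
Proof.
  intros Hr; unfold barrier.
  replace (t0 + (r * r - t0)) with (r * r) by ring.
  rewrite phi_square, !Rminus_diag, psi_0 by lra; field; lra.
Qed.

Lemma barrier_pos (K t0 a1 a2 a3 r t x1 x2 x3 : R) :
  0 <= K -> 0 < r -> cylinder t0 a1 a2 a3 r t x1 x2 x3 ->
  0 < barrier K t0 a1 a2 a3 r t x1 x2 x3.
Proof.
  intros HK Hr (Ht & H1 & H2 & H3); unfold barrier.
  pose proof (phi_pos (t + (r * r - t0)) ltac:(lra)).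
  pose proof (psi_pos r _ Hr H1); pose proof (psi_pos r _ Hr H2); pose proof (psi_pos r _ Hr H3).
  lra.
Qed.

Lemma barrier_cont (K t0 a1 a2 a3 r : R) :
  0 < r -> cont_on (cylinder t0 a1 a2 a3 r) (barrier K t0 a1 a2 a3 r).
Proof.
  intros Hr; apply (cont_on_separable _ (fun t => K + phi (t + (r * r - t0)))).
  intros t x1 x2 x3 (Ht & H1 & H2 & H3); repeat split.
  - apply continuity_pt_plus; [apply continuity_pt_const; intros ? ?; reflexivity |].
    apply derivable_continuous_pt; eexists; apply derivable_pt_lim_phi_shift; lra.
  - apply derivable_continuous_pt; eexists; apply derivable_pt_lim_psi_shift; lra.
  - apply derivable_continuous_pt; eexists; apply derivable_pt_lim_psi_shift; lra.
  - apply derivable_continuous_pt; eexists; apply derivable_pt_lim_psi_shift; lra.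
Qed.

Section MaximumPrinciple.

Variables (u ut : F4) (D1 : nat -> F4) (D2 : nat -> nat -> F4) (M K : R).
Hypothesis u_cont : cont_on in_closed u.
Hypothesis u_diff : diag_derivatives u ut D1 D2.
Hypothesis u_subsolution : forall t x1 x2 x3, in_open t x1 x2 x3 ->
  ut t x1 x2 x3 - (D2 0%nat 0%nat t x1 x2 x3 + D2 1%nat 1%nat t x1 x2 x3
                   + D2 2%nat 2%nat t x1 x2 x3)
  <= - u t x1 x2 x3 ^ 3 + M.
Hypothesis K_nonneg : 0 <= K.
Hypothesis M_le_K3 : M <= K ^ 3.

Variables (t0 a1 a2 a3 r : R).
Hypothesis r_pos : 0 < r.
Hypothesis t0_range : r * r <= t0 <= 1.
Hypothesis a1_range : -1 <= a1 - r /\ a1 + r <= 1.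
Hypothesis a2_range : -1 <= a2 - r /\ a2 + r <= 1.
Hypothesis a3_range : -1 <= a3 - r /\ a3 + r <= 1.

Let Q := cylinder t0 a1 a2 a3 r.
Let w := barrier K t0 a1 a2 a3 r.
Let h : F4 := fun t x1 x2 x3 => u t x1 x2 x3 - w t x1 x2 x3.

Lemma cylinder_in_open t x1 x2 x3 : Q t x1 x2 x3 -> in_open t x1 x2 x3.
Proof. unfold Q, cylinder, in_open; lra. Qed.

Section BoxMaximum.

Variables (b0 b1 l1 m1 l2 m2 l3 m3 tp p1 p2 p3 : R).
Hypothesis box_in_cylinder :
  forall t x1 x2 x3, box b0 b1 l1 m1 l2 m2 l3 m3 t x1 x2 x3 -> Q t x1 x2 x3.
Hypothesis tp_range : b0 < tp <= b1.
Hypothesis p1_range : l1 < p1 < m1.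
Hypothesis p2_range : l2 < p2 < m2.
Hypothesis p3_range : l3 < p3 < m3.
Hypothesis h_max : forall t x1 x2 x3, box b0 b1 l1 m1 l2 m2 l3 m3 t x1 x2 x3 ->
  h t x1 x2 x3 <= h tp p1 p2 p3.

Let box_in_open_cylinder t x1 x2 x3 :
  box b0 b1 l1 m1 l2 m2 l3 m3 t x1 x2 x3 -> in_open t x1 x2 x3 /\ Q t x1 x2 x3.
Proof. intros; split; [apply cylinder_in_open |]; auto. Qed.

Lemma ut_ge_phi'_at_box_max : phi' (tp + (r * r - t0)) <= ut tp p1 p2 p3.
Proof.
  destruct (box_in_open_cylinder tp p1 p2 p3 ltac:(unfold box; lra)) as [Hopen (Hs & _)].
  apply (derivative_le_at_left_max_of_sub (fun s => u s p1 p2 p3)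
           (fun s => phi (s + (r * r - t0))) b0 tp);
    [apply (proj1 u_diff), Hopen | apply derivable_pt_lim_phi_shift; lra | lra |].
  intros s Hs'; pose proof (h_max s p1 p2 p3 ltac:(unfold box; lra)).
  unfold h, w, barrier in *; lra.
Qed.

Lemma D2_le_psi''_at_box_max :
  D2 0%nat 0%nat tp p1 p2 p3 <= psi'' r (p1 - a1) /\
  D2 1%nat 1%nat tp p1 p2 p3 <= psi'' r (p2 - a2) /\
  D2 2%nat 2%nat tp p1 p2 p3 <= psi'' r (p3 - a3).
Proof.
  destruct u_diff as [_ [HD1 HD2]].
  destruct (box_in_open_cylinder tp p1 p2 p3 ltac:(unfold box; lra)) as [Hopen (_ & Hy1 & Hy2 & Hy3)].
  repeat split.
  - apply (second_derivative_le_at_max_of_sub (fun y => u tp y p2 p3) (fun y => D1 0%nat tp y p2 p3)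
             (fun y => psi r (y - a1)) (fun y => psi' r (y - a1)) l1 m1 p1);
      [lra | | exact (HD2 0%nat _ _ _ _ ltac:(lia) Hopen) | apply derivable_pt_lim_psi'_shift; lra |].
    + intros y Hy; destruct (box_in_open_cylinder tp y p2 p3 ltac:(unfold box; lra)) as [Ho (_ & Ha & _)].
      split; [exact (HD1 0%nat _ _ _ _ ltac:(lia) Ho) | apply derivable_pt_lim_psi_shift; lra].
    + intros y Hy; pose proof (h_max tp y p2 p3 ltac:(unfold box; lra)).
      unfold h, w, barrier in *; lra.
  - apply (second_derivative_le_at_max_of_sub (fun y => u tp p1 y p3) (fun y => D1 1%nat tp p1 y p3)
             (fun y => psi r (y - a2)) (fun y => psi' r (y - a2)) l2 m2 p2);
      [lra | | exact (HD2 1%nat _ _ _ _ ltac:(lia) Hopen) | apply derivable_pt_lim_psi'_shift; lra |].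
    + intros y Hy; destruct (box_in_open_cylinder tp p1 y p3 ltac:(unfold box; lra)) as [Ho (_ & _ & Ha & _)].
      split; [exact (HD1 1%nat _ _ _ _ ltac:(lia) Ho) | apply derivable_pt_lim_psi_shift; lra].
    + intros y Hy; pose proof (h_max tp p1 y p3 ltac:(unfold box; lra)).
      unfold h, w, barrier in *; lra.
  - apply (second_derivative_le_at_max_of_sub (fun y => u tp p1 p2 y) (fun y => D1 2%nat tp p1 p2 y)
             (fun y => psi r (y - a3)) (fun y => psi' r (y - a3)) l3 m3 p3);
      [lra | | exact (HD2 2%nat _ _ _ _ ltac:(lia) Hopen) | apply derivable_pt_lim_psi'_shift; lra |].
    + intros y Hy; destruct (box_in_open_cylinder tp p1 p2 y ltac:(unfold box; lra)) as [Ho (_ & _ & _ & Ha)].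
      split; [exact (HD1 2%nat _ _ _ _ ltac:(lia) Ho) | apply derivable_pt_lim_psi_shift; lra].
    + intros y Hy; pose proof (h_max tp p1 p2 y ltac:(unfold box; lra)).
      unfold h, w, barrier in *; lra.
Qed.

Lemma u_le_barrier_at_box_max : u tp p1 p2 p3 <= w tp p1 p2 p3.
Proof.
  destruct (box_in_open_cylinder tp p1 p2 p3 ltac:(unfold box; lra))
    as [Hopen Hcyl]; pose proof Hcyl as (Hs & Hy1 & Hy2 & Hy3).
  pose proof ut_ge_phi'_at_box_max; pose proof D2_le_psi''_at_box_max.
  pose proof (u_subsolution tp p1 p2 p3 Hopen).
  pose proof (barrier_heat_inequality K r (tp + (r * r - t0)) (p1 - a1) (p2 - a2) (p3 - a3)
                K_nonneg ltac:(lra) r_pos Hy1 Hy2 Hy3) as Hw.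
  pose proof (barrier_pos K t0 a1 a2 a3 r tp p1 p2 p3 K_nonneg r_pos Hcyl) as Hw0.
  fold (barrier K t0 a1 a2 a3 r tp p1 p2 p3) in Hw; fold w in Hw, Hw0.
  apply pow3_le_inv; lra.
Qed.

End BoxMaximum.

Lemma u_bounded_above : exists B, 0 < B /\
  forall t x1 x2 x3, in_closed t x1 x2 x3 -> u t x1 x2 x3 <= B.
Proof.
  destruct (CompactBox.cont_on_box_attains_max 0 1 (-1) 1 (-1) 1 (-1) 1 u
              ltac:(lra) ltac:(lra) ltac:(lra) ltac:(lra) u_cont)
    as (t & x1 & x2 & x3 & _ & Hmax).
  exists (Rabs (u t x1 x2 x3) + 1); split; [pose proof (Rabs_pos (u t x1 x2 x3)); lra |].
  intros s y1 y2 y3 Hs; pose proof (Hmax s y1 y2 y3 Hs); pose proof (Rle_abs (u t x1 x2 x3)); lra.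
Qed.

Lemma shrunk_cylinder_interior_or_barrier_ge (d t x1 x2 x3 : R) :
  0 < d <= r / 2 ->
  box (t0 - r * r + d * d) t0 (a1 - r + d) (a1 + r - d)
      (a2 - r + d) (a2 + r - d) (a3 - r + d) (a3 + r - d) t x1 x2 x3 ->
  (t0 - r * r + d * d < t /\ a1 - r + d < x1 < a1 + r - d /\
   a2 - r + d < x2 < a2 + r - d /\ a3 - r + d < x3 < a3 + r - d)
  \/ / d <= w t x1 x2 x3.
Proof.
  intros Hd (Ht & H1 & H2 & H3).
  pose proof (phi_pos (t + (r * r - t0)) ltac:(nra)).
  pose proof (psi_pos r (x1 - a1) r_pos ltac:(lra)).
  pose proof (psi_pos r (x2 - a2) r_pos ltac:(lra)).
  pose proof (psi_pos r (x3 - a3) r_pos ltac:(lra)).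
  destruct (phi_interior_or_ge t0 r d t ltac:(lra) ltac:(lra));
  destruct (psi_interior_or_ge a1 r d x1 Hd H1);
  destruct (psi_interior_or_ge a2 r d x2 Hd H2);
  destruct (psi_interior_or_ge a3 r d x3 Hd H3);
  solve [left; auto | right; unfold w, barrier; lra].
Qed.

Lemma u_le_barrier_at_top_centre : u t0 a1 a2 a3 <= K + 13 / r.
Proof.
  destruct u_bounded_above as (B & HB & Hu_le_B).
  set (d := Rmin (r / 2) (/ B)).
  assert (Hd : 0 < d <= r / 2) by (split; [apply Rmin_pos; [lra | apply Rinv_0_lt_compat; lra] | apply Rmin_l]).
  assert (HBd : B <= / d).
  { rewrite <- (Rinv_inv B); apply Rinv_le_contravar; [lra | apply Rmin_r]. }
  set (Bd := box (t0 - r * r + d * d) t0 (a1 - r + d) (a1 + r - d)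
                 (a2 - r + d) (a2 + r - d) (a3 - r + d) (a3 + r - d)).
  assert (HBd_Q : forall t x1 x2 x3, Bd t x1 x2 x3 -> Q t x1 x2 x3)
    by (unfold Bd, box, Q, cylinder; intros; nra).
  assert (HBd_closed : forall t x1 x2 x3, Bd t x1 x2 x3 -> in_closed t x1 x2 x3)
    by (unfold Bd, box, in_closed; intros; nra).
  assert (Hh_cont : cont_on Bd h)
    by exact (cont_on_minus _ u w (cont_on_subset _ _ u HBd_closed u_cont)
                (cont_on_subset _ _ w HBd_Q (barrier_cont K t0 a1 a2 a3 r r_pos))).
  destruct (CompactBox.cont_on_box_attains_max (t0 - r * r + d * d) t0 (a1 - r + d) (a1 + r - d)
              (a2 - r + d) (a2 + r - d) (a3 - r + d) (a3 + r - d) h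
              ltac:(nra) ltac:(lra) ltac:(lra) ltac:(lra) Hh_cont)
    as (tp & p1 & p2 & p3 & Hp & Hmax).
  destruct (Rle_or_lt (u t0 a1 a2 a3) (K + 13 / r)) as [Hle | Hgt]; [exact Hle | exfalso].
  assert (Hh_pos : 0 < h tp p1 p2 p3).
  { pose proof (Hmax t0 a1 a2 a3 ltac:(unfold box; nra)).
    unfold h, w in *; rewrite barrier_top_centre in * by lra; lra. }
  destruct (shrunk_cylinder_interior_or_barrier_ge d tp p1 p2 p3 Hd Hp)
    as [(Ht & H1 & H2 & H3) | Hw].
  - pose proof (u_le_barrier_at_box_max _ _ _ _ _ _ _ _ tp p1 p2 p3 HBd_Q
                  ltac:(destruct Hp; lra) H1 H2 H3 Hmax).
    unfold h in Hh_pos; lra.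
  - pose proof (Hu_le_B tp p1 p2 p3 (HBd_closed _ _ _ _ Hp)); unfold h in Hh_pos; lra.
Qed.

End MaximumPrinciple.

Lemma cbrt_spec (M : R) : 0 <= M -> 0 <= cbrt M /\ M <= cbrt M ^ 3.
Proof.
  intros HM; unfold cbrt; destruct (Rle_dec M 0) as [HM0 | HM0].
  - simpl; lra.
  - split; [unfold Rpower; apply Rlt_le, exp_pos |].
    rewrite <- Rpower_pow by (unfold Rpower; apply exp_pos).
    rewrite Rpower_mult; replace (/ 3 * INR 3) with 1 by (simpl; field).
    rewrite Rpower_1; lra.
Qed.

Definition parabolic_dist (t x1 x2 x3 : R) : R :=
  Rmin (sqrt t)
       (Rmin (Rmin (1 - x1) (1 + x1))
             (Rmin (Rmin (1 - x2) (1 + x2)) (Rmin (1 - x3) (1 + x3)))).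

Lemma parabolic_dist_spec (t x1 x2 x3 : R) : in_open t x1 x2 x3 ->
  let r := parabolic_dist t x1 x2 x3 in
  0 < r /\ r * r <= t <= 1 /\ (-1 <= x1 - r /\ x1 + r <= 1) /\
  (-1 <= x2 - r /\ x2 + r <= 1) /\ (-1 <= x3 - r /\ x3 + r <= 1).
Proof.
  intros (Ht & H1 & H2 & H3) r.
  assert (Hsqrt : 0 < sqrt t) by (apply sqrt_lt_R0; lra).
  assert (Hr : 0 < r) by (unfold r, parabolic_dist; repeat apply Rmin_pos; lra).
  assert (Hrt : r * r <= t).
  { rewrite <- (sqrt_sqrt t) by lra; apply Rmult_le_compat; try lra; apply Rmin_l. }
  unfold r, parabolic_dist in *.
  repeat match goal with
         | |- context [Rmin ?a ?b] =>
             lazymatch goal with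
             | _ : Rmin a b <= a |- _ => fail
             | _ => pose proof (Rmin_l a b); pose proof (Rmin_r a b)
             end
         end.
  lra.
Qed.

Theorem lemma2p7 :
  exists C : R,
  forall (u g ut : F4) (D1 : nat -> F4) (D2 : nat -> nat -> F4) (M : R),
    cont_on in_closed u ->
    C1t_C2x u ut D1 D2 ->
    0 <= M ->
    (forall t x1 x2 x3, in_open t x1 x2 x3 -> Rabs (g t x1 x2 x3) <= M) ->
    (forall t x1 x2 x3, in_open t x1 x2 x3 ->
       ut t x1 x2 x3
       - (D2 0%nat 0%nat t x1 x2 x3 + D2 1%nat 1%nat t x1 x2 x3
          + D2 2%nat 2%nat t x1 x2 x3)
       = - (u t x1 x2 x3) ^ 3 + g t x1 x2 x3) ->
    forall t x1 x2 x3, in_open t x1 x2 x3 ->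
      Rabs (u t x1 x2 x3) <=
      C * Rmax
            (/ Rmin (sqrt t)
                 (Rmin (Rmin (1 - x1) (1 + x1))
                   (Rmin (Rmin (1 - x2) (1 + x2)) (Rmin (1 - x3) (1 + x3)))))
            (cbrt M).
Proof.
  exists 14.
  intros u g ut D1 D2 M Hcont Hreg HM Hg Heq t x1 x2 x3 Hopen.
  change (Rmin (sqrt t) _) with (parabolic_dist t x1 x2 x3).
  destruct (parabolic_dist_spec t x1 x2 x3 Hopen) as (Hr & Ht & Hx1 & Hx2 & Hx3).
  set (r := parabolic_dist t x1 x2 x3) in *.
  destruct (cbrt_spec M HM) as [HK HMK]; set (K := cbrt M) in *.
  assert (Hdiag := C1t_C2x_diag_derivatives u ut D1 D2 Hreg).
  assert (Hupper : u t x1 x2 x3 <= K + 13 / r).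
  { apply (u_le_barrier_at_top_centre u ut D1 D2 M K); auto.
    intros s y1 y2 y3 Hy; rewrite Heq by exact Hy.
    pose proof (Rle_abs (g s y1 y2 y3)); pose proof (Hg s y1 y2 y3 Hy); lra. }
  assert (Hlower : oppF u t x1 x2 x3 <= K + 13 / r).
  { apply (u_le_barrier_at_top_centre (oppF u) (oppF ut) (fun i => oppF (D1 i))
             (fun i j => oppF (D2 i j)) M K); auto using cont_on_opp, diag_derivatives_oppF.
    intros s y1 y2 y3 Hy; unfold oppF; pose proof (Heq s y1 y2 y3 Hy).
    pose proof (Rle_abs (- g s y1 y2 y3)); rewrite Rabs_Ropp in *.
    pose proof (Hg s y1 y2 y3 Hy); lra. }
  unfold oppF in Hlower.
  pose proof (Rmax_l (/ r) K); pose proof (Rmax_r (/ r) K).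
  apply Rabs_le; unfold Rdiv in *; lra.
Qed.
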